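(* Let $G$ be an almost hypocyclic graph with exceptional vertex $w$. Then for every partition $(W,X)$ of $V(G)$ with $|W| > 1$ and $|X| > 1$, we have $p(G[W]) < |X|$ and $k(G[W]) < |X|$.
   Context: All graphs are finite, undirected, connected (except where stated, e.g. induced subgraphs), without loops or multiple edges. A graph is hamiltonian if it has a cycle through all its vertices. A graph $G$ is almost hypocyclic if there exists a vertex $w$ (the exceptional vertex) such that $G - w$ is non-hamiltonian but $G - v$ is hamiltonian for every vertex $v \neq w$. $G[S]$ denotes the subgraph induced by $S \subseteq V(G)$. For a possibly disconnected graph $G$: $p(G)$ is the minimum number of pairwise vertex-disjoint paths (a single vertex counts as a path) needed to cover all vertices of $G$; $V_1(G)$ is the set of vertices of degree $1$ in $G$; $I(G)$ is the set of all isolated vertices and isolated edges of $G$ (i.e. components isomorphic to $K_1$ or $K_2$), and $|I(G)|$ is their number; and $k(G)$ is defined recursively by $k(G) = 0$ if $G$ is empty, $k(G) = \max\{1, \lceil |V_1(G)|/2 \rceil\}$ if $I(G) = \emptyset$ but $G$ is not empty, and $k(G) = |I(G)| + k(G - I(G))$ otherwise, where $G - I(G)$ is obtained by removing the vertices of these isolated vertices and edges. *)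

(* Induced subgraphs G[S] are
   represented by their vertex set S : {set T} (edges = e restricted to S). *)
From mathcomp Require Import all_boot.
Set Implicit Arguments. Unset Strict Implicit. Unset Printing Implicit Defensive.

Section Graphs.
Variable T : finType.
Variable e : rel T.

Definition simple_graph : Prop := symmetric e /\ irreflexive e.

Definition connected_graph : Prop := forall x y : T, connect e x y.

Definition hamiltonian_on (S : {set T}) : Prop :=
  exists s : seq T, [/\ uniq s, [set x in s] = S, 3 <= size s & cycle e s].

Definition almost_hypocyclic_at (w : T) : Prop :=
  ~ hamiltonian_on [set~ w] /\ (forall v, v != w -> hamiltonian_on [set~ v]).

Definition is_path_in (S : {set T}) (p : seq T) : bool :=
  match p with
  | [::] => false
  | x :: q => [&& uniq p, all (fun y => y \in S) p & path e x q]
  end.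

Definition path_cover (S : {set T}) (P : seq (seq T)) : Prop :=
  [/\ all (is_path_in S) P, uniq (flatten P) & forall x, x \in S -> x \in flatten P].

Definition path_cover_number (S : {set T}) (n : nat) : Prop :=
  (exists P, path_cover S P /\ size P = n) /\
  (forall P, path_cover S P -> n <= size P).

Definition deg_in (S : {set T}) (v : T) : nat := #|[set u in S | e v u]|.

Definition V1 (S : {set T}) : {set T} := [set v in S | deg_in S v == 1].

(* I(G[S]): the components of G[S] isomorphic to K1 or K2, as vertex sets *)
Definition Icomps (S : {set T}) : {set {set T}} :=
  [set C : {set T} |
     [exists v, (v \in S) && (deg_in S v == 0) && (C == [set v])] ||
     [exists u, exists v, [&& u \in S, v \in S, e u v, deg_in S u == 1,
                              deg_in S v == 1 & C == [set u; v]]]].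

(* k(G[S]) by recursion; the fuel is #|S| and each recursive step removes at
   least one vertex, so the fuel never runs out. *)
Fixpoint k_fuel (n : nat) (S : {set T}) : nat :=
  match n with
  | 0 => 0
  | n'.+1 =>
      if S == set0 then 0
      else if Icomps S == set0 then maxn 1 (uphalf #|V1 S|)
      else #|Icomps S| + k_fuel n' (S :\: cover (Icomps S))
  end.

Definition k_num (S : {set T}) : nat := k_fuel #|S| S.
End Graphs.

(** Take [v] in [X] other than the exceptional vertex and a second vertex [x]
    of [X].  A hamiltonian cycle of [G - v], read as a hamiltonian path from
    [x], visits the vertices of [W] in maximal runs; each run is a path of
    [G[W]], and consecutive runs are separated by a vertex of [X] other than
    [v] and [x], so there are at most [|X| - 1] runs.
    Moreover [k(G[S])] is at most the size of any path cover of [G[S]]: the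
    cover needs one path inside each isolated vertex or edge, and its other
    paths cover what is left; once no such components remain, every vertex of
    degree one is an end of some path. *)
From mathcomp Require Import all_boot zify.
From Stdlib Require Import Lia.
Set Implicit Arguments. Unset Strict Implicit. Unset Printing Implicit Defensive.

Section PathCovers.
Variable T : finType.
Variable e : rel T.

Lemma is_path_inE (S : {set T}) p :
  is_path_in e S p = [&& p != [::], uniq p, all (fun y => y \in S) p & sorted e p].
Proof. by case: p. Qed.

Lemma uniq_flatten_in (P : seq (seq T)) p : p \in P -> uniq (flatten P) -> uniq p.
Proof.
case/splitPr=> P1 P2; rewrite flatten_cat cat_uniq => /and3P[_ _] /=.
by rewrite cat_uniq => /andP[].
Qed.

Lemma path_filter_runs (a : pred T) x t : path e x t ->
  exists P : seq (seq T),
    [/\ all (fun p => (p != [::]) && sorted e p) P, flatten P = filter a (x :: t)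
      & size P <= (count (predC a) t).+1].
Proof.
elim: t x => [|y t IH] x /=.
  by exists (if a x then [:: [:: x]] else [::]); case: (a x).
case/andP=> exy /IH[P [runsP flatP sizeP]].
case ax: (a x); last first.
  by exists P; split => //; move: sizeP; lia.
case ay: (a y); last first.
  by exists ([:: x] :: P); split => //=; rewrite flatP /= ay.
move: runsP flatP sizeP; rewrite /= ay.
case: P => [|[|z q] P] //= /andP[sorted_q runsP] [zy flat_t] sizeP; subst z.
exists ((x :: y :: q) :: P); split => //=; rewrite ?flat_t //.
by rewrite exy sorted_q.
Qed.

Lemma path_cover_runs (S : {set T}) x t :
  path e x t -> uniq (x :: t) -> {subset S <= x :: t} ->
  exists P, path_cover e S P /\ size P <= (count (fun y => y \notin S) t).+1.
Proof.
move=> path_t uniq_t S_sub.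
have [P [runsP flatP sizeP]] := path_filter_runs (fun y => y \in S) path_t.
have uniqP : uniq (flatten P) by rewrite flatP filter_uniq.
exists P; split=> //; split=> //.
- apply/allP=> p pP; have /andP[p_ne sorted_p] := allP runsP p pP.
  rewrite is_path_inE p_ne sorted_p (uniq_flatten_in pP uniqP) andbT /=.
  apply/allP=> y yp; have : y \in flatten P by apply/flattenP; exists p.
  by rewrite flatP mem_filter => /andP[].
- by move=> y yS; rewrite flatP mem_filter yS S_sub.
Qed.

Lemma hamiltonian_path_from (S : {set T}) x : hamiltonian_on e S -> x \in S ->
  exists t, [/\ path e x t, uniq (x :: t) & x :: t =i S].
Proof.
case=> s [uniq_s <- _ cycle_s]; rewrite inE => xs; move: uniq_s cycle_s.
case/splitPr: xs => s1 s2 uniq_s cycle_s; exists (s2 ++ s1).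
have rotE : rot (size s1) (s1 ++ x :: s2) = x :: s2 ++ s1 by rewrite rot_size_cat.
split.
- by move: cycle_s; rewrite -(rot_cycle (size s1)) rotE /= rcons_path => /andP[].
- by rewrite -rotE rot_uniq.
- by move=> y; rewrite -rotE mem_rot inE.
Qed.

Lemma hamiltonian_path_cover_lt (S : {set T}) v x :
  hamiltonian_on e [set~ v] -> v \notin S -> x \notin S -> x != v ->
  exists P, path_cover e S P /\ size P < #|~: S|.
Proof.
move=> ham vS xS xv.
have xV : x \in [set~ v] by rewrite !inE.
have [t [path_t uniq_t memt]] := hamiltonian_path_from ham xV.
have S_sub : {subset S <= x :: t}.
  by move=> y yS; rewrite memt !inE; apply: contraNneq vS => <-.
have [P [coverP sizeP]] := path_cover_runs path_t uniq_t S_sub.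
exists P; split=> //; apply: leq_ltn_trans sizeP _.
have outside_t : count (fun y => y \notin S) t <= #|~: S :\ v :\ x|.
  rewrite -size_filter cardE; apply: uniq_leq_size.
    by rewrite filter_uniq //; case/andP: uniq_t.
  move=> y; rewrite mem_filter mem_enum => /andP[yS yt].
  have : y \in x :: t by rewrite inE yt orbT.
  rewrite memt !inE yS andbT => ->; rewrite andbT.
  by apply: contraNneq (proj1 (andP uniq_t)) => <-.
have -> : #|~: S| = (#|~: S :\ v :\ x|).+2.
  by rewrite (cardsD1 v) (cardsD1 x (~: S :\ v)) !inE vS xS xv.
by rewrite ltnS.
Qed.

Hypothesis e_sym : symmetric e.

Definition closed_nbhd (S : {set T}) (x : T) : {set T} := x |: [set y in S | e x y].

Lemma Icomps_closed_nbhd S C x : C \in Icomps e S -> x \in C ->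
  x \in S /\ C = closed_nbhd S x.
Proof.
have nbhd1 v u : deg_in e S v = 1 -> u \in S -> e v u -> [set y in S | e v y] = [set u].
  move=> /eqP/cards1P[z Nz] uS evu.
  have : u \in [set y in S | e v y] by rewrite inE uS evu.
  by rewrite Nz inE => /eqP ->.
rewrite inE => /orP[/existsP[v /andP[/andP[vS /eqP d0] /eqP ->]]|].
  by rewrite inE => /eqP ->; rewrite /closed_nbhd (cards0_eq d0) setU0.
case/existsP=> u /existsP[v /and5P[uS vS euv /eqP du /andP[/eqP dv /eqP ->]]].
rewrite !inE => /orP[/eqP ->|/eqP ->]; first by rewrite /closed_nbhd (nbhd1 u v).
by rewrite /closed_nbhd (nbhd1 v u) 1?e_sym // setUC.
Qed.

Lemma Icomps_nonempty S C : C \in Icomps e S -> exists x, x \in C.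
Proof.
rewrite inE => /orP[/existsP[v /andP[_ /eqP ->]]|]; first by exists v; rewrite inE.
case/existsP=> u /existsP[v /and5P[_ _ _ _ /andP[_ /eqP ->]]].
by exists u; rewrite !inE eqxx.
Qed.

Lemma Icomps_closed S C : C \in Icomps e S ->
  forall x y, x \in C -> y \in S -> e x y -> y \in C.
Proof.
move=> CI x y xC yS exy; have [_ ->] := Icomps_closed_nbhd CI xC.
by rewrite !inE yS exy orbT.
Qed.

Lemma cover_Icomps_closed S x y : x \in cover (Icomps e S) -> y \in S -> e x y ->
  y \in cover (Icomps e S).
Proof.
case/bigcupP=> C CI xC yS exy; apply/bigcupP; exists C => //.
exact: Icomps_closed CI _ _ xC yS exy.
Qed.

Lemma sorted_closed_all (S C : {set T}) p :
  (forall x y, x \in C -> y \in S -> e x y -> y \in C) ->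
  sorted e p -> all (fun y => y \in S) p -> has (fun y => y \in C) p ->
  all (fun y => y \in C) p.
Proof.
move=> closedC; elim: p => [|x [|y q] IH] //=.
case/andP=> exy sorted_q /andP[xS /andP[yS qS]].
have IHq := IH sorted_q; rewrite /= yS qS in IHq.
case xC: (x \in C) => /=.
  by rewrite IHq //= (closedC x y).
move=> has_q; have /andP[yC _] := IHq isT has_q.
by move: xC; rewrite (closedC y x) // e_sym.
Qed.

Lemma path_cover_Icomps_drop S P : path_cover e S P ->
  path_cover e (S :\: cover (Icomps e S))
    [seq p <- P | ~~ has (fun y => y \in cover (Icomps e S)) p].
Proof.
set A := cover (Icomps e S); move=> [pathsP uniqP coverP]; split.
- apply/allP=> p; rewrite mem_filter => /andP[p_out pP].
  move: (allP pathsP p pP); rewrite !is_path_inE => /and4P[-> -> /allP pS ->].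
  rewrite andbT /=; apply/allP=> y yp; rewrite inE pS // andbT.
  by apply: contra p_out => yA; apply/hasP; exists y.
- have := perm_filterC (fun p => ~~ has (fun y => y \in A) p) P.
  move/permPl/perm_flatten/perm_uniq.
  by rewrite uniqP flatten_cat cat_uniq => /and3P[].
- move=> z; rewrite inE => /andP[zA zS].
  have /flattenP[p pP zp] := coverP z zS.
  apply/flattenP; exists p => //; rewrite mem_filter pP andbT /=.
  apply: contra zA => has_p.
  move: (allP pathsP p pP); rewrite is_path_inE => /and4P[_ _ pS sorted_p].
  exact: allP (sorted_closed_all (@cover_Icomps_closed S) sorted_p pS has_p) z zp.
Qed.

Lemma card_Icomps_le S P : path_cover e S P ->
  #|Icomps e S| <= count (has (fun y => y \in cover (Icomps e S))) P.
Proof.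
move=> [pathsP _ coverP]; rewrite -size_filter.
set Q := filter _ P; set heads := [seq closed_nbhd S y | y <- pmap ohead Q].
apply: (@leq_trans #|heads|); last first.
  by rewrite (leq_trans (card_size _)) // size_map size_pmap count_size.
apply: subset_leq_card; apply/subsetP => C CI.
have [x xC] := Icomps_nonempty CI; have [xS _] := Icomps_closed_nbhd CI xC.
have /flattenP[p pP xp] := coverP x xS.
move: (allP pathsP p pP); rewrite is_path_inE => /and4P[_ _ pS sorted_p].
have has_p : has (fun y => y \in C) p by apply/hasP; exists x.
have := sorted_closed_all (Icomps_closed CI) sorted_p pS has_p.
case: p pP xp pS sorted_p has_p => [//|y q] pP _ _ _ _ /andP[yC _].
apply/mapP; exists y; last by have [_ ->] := Icomps_closed_nbhd CI yC.
rewrite mem_pmap; apply/mapP; exists (y :: q) => //.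
rewrite mem_filter pP andbT; apply/hasP; exists y; first by rewrite inE eqxx.
by apply/bigcupP; exists C.
Qed.

Lemma deg1_path_end (S : {set T}) x p v : uniq p -> sorted e p ->
  all (fun y => y \in S) p -> v \in p -> deg_in e S v = 1 ->
  v = head x p \/ v = last x p.
Proof.
move=> + + + vp; case/splitPr: _ / vp => p1 p2.
case/lastP: p1 => [|p1 a] uniq_p sorted_p pS dv; first by left.
case: p2 uniq_p sorted_p pS => [|b p2] uniq_p sorted_p pS.
  by right; rewrite last_cat last_rcons.
exfalso; move: uniq_p sorted_p pS; rewrite cat_rcons cat_uniq sorted_cat_cons /=.
move=> /and3P[_ _ /andP[]]; rewrite !inE => /norP[_ /norP[nab _]] _.
move=> /and3P[_ eav /andP[evb _]] /allP pS.
have aS : a \in S by apply: pS; rewrite mem_cat !inE eqxx orbT.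
have bS : b \in S by apply: pS; rewrite mem_cat !inE eqxx !orbT.
have : #|[set a; b]| <= deg_in e S v.
  apply: subset_leq_card; apply/subsetP => z; rewrite !inE.
  by case/orP=> /eqP ->; rewrite ?aS ?bS ?evb // e_sym.
by rewrite cards2 nab dv.
Qed.

Lemma card_V1_le S P : path_cover e S P -> #|V1 e S| <= (size P).*2.
Proof.
case=> pathsP _ coverP; have [->|[x _]] := set_0Vmem (V1 e S); first by rewrite cards0.
pose ends := [seq head x p | p <- P] ++ [seq last x p | p <- P].
have -> : (size P).*2 = size ends by rewrite size_cat !size_map addnn.
apply: leq_trans (card_size ends); apply: subset_leq_card; apply/subsetP => v.
rewrite inE => /andP[vS /eqP d1]; have /flattenP[p pP vp] := coverP v vS.
move: (allP pathsP p pP); rewrite is_path_inE => /and4P[_ uniq_p pS sorted_p].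
by case: (deg1_path_end x uniq_p sorted_p pS vp d1) => ->; rewrite mem_cat map_f ?orbT.
Qed.

Lemma k_fuel_le_path_cover n S P : path_cover e S P -> k_fuel e n S <= size P.
Proof.
elim: n S P => [//|n IH] S P coverP /=.
have [->|[x xS]] := set_0Vmem S; first by rewrite eqxx.
rewrite ifN; last by apply/set0Pn; exists x.
case: ifP => _.
  rewrite geq_max leq_uphalf_double (card_V1_le coverP) andbT.
  by case: coverP => _ _ /(_ x xS); case: P => [|//]; rewrite in_nil.
set A := cover (Icomps e S).
rewrite -(count_predC (has (fun y => y \in A)) P).
apply: leq_add; first exact: card_Icomps_le.
by rewrite -size_filter; apply/IH/path_cover_Icomps_drop.
Qed.
End PathCovers.

Theorem lemma3p1 (T : finType) (e : rel T) (w : T) :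
  simple_graph e -> connected_graph e -> almost_hypocyclic_at e w ->
  forall W X : {set T},
    W :&: X = set0 -> W :|: X = [set: T] -> 1 < #|W| -> 1 < #|X| ->
    (forall n, path_cover_number e W n -> n < #|X|) /\ k_num e W < #|X|.
Proof.
move=> [e_sym _] _ [_ ham] W X WX0 WXT _ X_gt1.
have XE : X = ~: W.
  apply/setP=> z; have : z \notin W :&: X by rewrite WX0 inE.
  have := in_setT z; rewrite -WXT !inE.
  by case: (z \in W); case: (z \in X).
have [v [x [vX xX xv vw]]] : exists v x, [/\ v \in X, x \in X, x != v & v != w].
  case/card_gt1P: X_gt1 => a [b [aX bX ab]].
  have [aw|aw] := eqVneq a w; last by exists a, b; split; rewrite // eq_sym.
  by exists b, a; split; rewrite // -aw eq_sym.
rewrite XE !inE in vX xX.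
have [P [coverP sizeP]] := hamiltonian_path_cover_lt (ham v vw) vX xX xv.
rewrite XE; split=> [n [_ minP]|]; first exact: leq_ltn_trans (minP P coverP) sizeP.
exact: leq_ltn_trans (k_fuel_le_path_cover _ _ coverP) sizeP.
Qed.
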